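(* Let $A\in\mathbb{R}^{n\times n}$, let $\lambda\in\mathbb{R}$, and let $v\in\mathbb{R}^{n\times1}$ and $u\in\mathbb{R}^{1\times n}$ satisfy $Av=\lambda v$, $uA=\lambda u$ and $uv=1$. Then for every row vector $u'\in\mathbb{R}^{1\times n}$ with $u'v=1$, the matrix $\lambda vu'+(I-vu')A$ is conjugate (similar) to $A$, and for every integer $k\ge 0$, \[\bigl(\lambda vu'+(I-vu')A\bigr)^k=\lambda^k vu'+(I-vu')A^k,\] where $I$ is the $n\times n$ identity matrix. *)

From HB Require Import structures.
From mathcomp Require Import all_boot all_order all_algebra.
Set Implicit Arguments. Unset Strict Implicit. Unset Printing Implicit Defensive.
Import GRing.Theory Num.Theory.
Local Open Scope ring_scope.

Definition mx_conjugate (R : comUnitRingType) (n : nat) (A B : 'M[R]_n) : Prop :=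
  exists2 P : 'M[R]_n, P \in unitmx & B = invmx P *m A *m P.

From HB Require Import structures.
From mathcomp Require Import all_boot all_order all_algebra.
Set Implicit Arguments. Unset Strict Implicit. Unset Printing Implicit Defensive.
Import GRing.Theory Num.Theory.
Local Open Scope ring_scope.

(* P := v u' is idempotent (u' v = 1) and A P = lambda P, so in the powers of
   lambda P + (1 - P) A the cross terms P (1 - P) and (1 - P) A^k P vanish.
   For the conjugacy, w := u' - u kills v, so N := v w squares to zero and
   1 + N is invertible with inverse 1 - N; conjugating A by 1 + N gives
   A + lambda N - N A, which is lambda P + (1 - P) A because v u A = lambda v u. *)

Section DeflationPowers.

Variables (R : comPzRingType) (n : nat) (A P : 'M[R]_n) (l : R).
Hypotheses (idemP : P *m P = P) (eigenP : A *m P = l *: P).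

Lemma mulmx_exp_eigen k : A ^+ k *m P = l ^+ k *: P.
Proof.
elim: k => [|k IHk]; first by rewrite expr0 scale1r mul1mx.
by rewrite exprS -mulmxE -mulmxA IHk -scalemxAr eigenP scalerA -exprSr.
Qed.

Lemma mulmx_compl_idem : P *m (1%:M - P) = 0.
Proof. by rewrite mulmxBr mulmx1 idemP subrr. Qed.

Lemma mulmx_idem_compl : (1%:M - P) *m P = 0.
Proof. by rewrite mulmxBl mul1mx idemP subrr. Qed.

Lemma expr_deflation k :
  (l *: P + (1%:M - P) *m A) ^+ k = l ^+ k *: P + (1%:M - P) *m A ^+ k.
Proof.
elim: k => [|k IHk]; first by rewrite !expr0 scale1r mulmx1 addrC subrK.
set Q := 1%:M - P.
have QAkP : Q *m A ^+ k *m P = 0.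
  by rewrite -mulmxA mulmx_exp_eigen -scalemxAr mulmx_idem_compl scaler0.
have QAkQ : Q *m A ^+ k *m Q = Q *m A ^+ k.
  by rewrite mulmxBr mulmx1 QAkP subr0.
rewrite exprSr IHk -mulmxE (mulmxDl (l ^+ k *: P)) (mulmxDr (l ^+ k *: P)).
rewrite (mulmxDr (Q *m A ^+ k)) -!scalemxAl -!scalemxAr idemP mulmxA.
rewrite mulmx_compl_idem mul0mx scaler0 addr0 QAkP scaler0 add0r scalerA -exprSr.
by rewrite mulmxA QAkQ (exprSr A) -mulmxE mulmxA.
Qed.

End DeflationPowers.

Section RankOneConjugation.

Variables (R : comUnitRingType) (n : nat).

Lemma mulmx_1D_1B_sqr0 (N : 'M[R]_n) : N *m N = 0 -> (1%:M + N) *m (1%:M - N) = 1%:M.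
Proof. by move=> NN0; rewrite mulmxDl mul1mx mulmxBr mulmx1 NN0 subr0 subrK. Qed.

Lemma unitmx_1D_sqr0 (N : 'M[R]_n) : N *m N = 0 -> 1%:M + N \in unitmx.
Proof. by move/mulmx_1D_1B_sqr0/mulmx1_unit=> []. Qed.

Lemma invmx_1D_sqr0 (N : 'M[R]_n) : N *m N = 0 -> invmx (1%:M + N) = 1%:M - N.
Proof.
move=> NN0; have := mulKmx (unitmx_1D_sqr0 NN0) (1%:M - N).
by rewrite mulmx_1D_1B_sqr0 // mulmx1.
Qed.

Variables (A : 'M[R]_n) (l : R) (v : 'cV[R]_n) (w : 'rV[R]_n).
Hypotheses (eigen_v : A *m v = l *: v) (wv0 : w *m v = 0).

Lemma sqr_rank_one0 : v *m w *m (v *m w) = 0.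
Proof. by rewrite mulmxA -(mulmxA v) wv0 mulmx0 mul0mx. Qed.

Lemma conj_1D_rank_one :
  invmx (1%:M + v *m w) *m A *m (1%:M + v *m w) = A + l *: (v *m w) - v *m w *m A.
Proof.
have Avw : A *m (v *m w) = l *: (v *m w) by rewrite mulmxA eigen_v scalemxAl.
rewrite invmx_1D_sqr0 ?sqr_rank_one0 // -mulmxA mulmxDr mulmx1 Avw mulmxDr.
rewrite -scalemxAr !mulmxBl !mul1mx sqr_rank_one0 subr0.
by rewrite addrAC.
Qed.

End RankOneConjugation.

Lemma mx_conjugate_deflation (R : comUnitRingType) (n : nat) (A : 'M[R]_n) (l : R)
    (v : 'cV[R]_n) (u u' : 'rV[R]_n) :
  A *m v = l *: v -> u *m A = l *: u -> u *m v = 1%:M -> u' *m v = 1%:M ->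
  mx_conjugate A (l *: (v *m u') + (1%:M - v *m u') *m A).
Proof.
move=> eigen_v eigen_u uv1 u'v1; set w := u' - u.
have wv0 : w *m v = 0 by rewrite mulmxBl u'v1 uv1 subrr.
exists (1%:M + v *m w); first exact/unitmx_1D_sqr0/sqr_rank_one0.
rewrite (conj_1D_rank_one eigen_v wv0) /w mulmxBr !mulmxBl mul1mx.
rewrite -(mulmxA v u) eigen_u -scalemxAr scalerBr.
by rewrite opprB !addrA subrK (addrC A).
Qed.

Theorem lemma4p3 (R : realFieldType) (n : nat) (A : 'M[R]_n) (lambda : R)
  (v : 'cV[R]_n) (u : 'rV[R]_n)
  (hv : A *m v = lambda *: v) (hu : u *m A = lambda *: u)
  (huv : u *m v = 1%:M) :
  forall u' : 'rV[R]_n, u' *m v = 1%:M ->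
    mx_conjugate A (lambda *: (v *m u') + (1%:M - v *m u') *m A) /\
    (forall k : nat,
       (lambda *: (v *m u') + (1%:M - v *m u') *m A) ^+ k
       = lambda ^+ k *: (v *m u') + (1%:M - v *m u') *m (A ^+ k)).
Proof.
move=> u' u'v1; split; first exact: mx_conjugate_deflation hv hu huv u'v1.
apply: expr_deflation.
- by rewrite mulmxA -(mulmxA v) u'v1 mulmx1.
- by rewrite mulmxA hv scalemxAl.
Qed.
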